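(* Let $n\ge2$ and $1\le r\le n-1$, and let $M$ be an invertible real $n\times n$ matrix. Let $\mathcal{M}$ be the set of all $P\in\mathbb{R}^{r\times(n-r)}$ such that $$\begin{pmatrix}\mathrm{Id}_r&P\\0&\mathrm{Id}_{n-r}\end{pmatrix}^{-1}M\begin{pmatrix}\mathrm{Id}_r&P\\0&\mathrm{Id}_{n-r}\end{pmatrix}=\begin{pmatrix}*&*\\ *&\hat M\end{pmatrix}$$ with $\hat M$ (the bottom-right $(n-r)\times(n-r)$ block) invertible. Then $\mathcal{M}$ is open and dense in $\mathbb{R}^{r\times(n-r)}$. *)

From HB Require Import structures.
From mathcomp Require Import all_boot all_order all_algebra.
From mathcomp Require Import all_classical all_reals all_analysis.
Set Implicit Arguments. Unset Strict Implicit. Unset Printing Implicit Defensive.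
Import Order.TTheory GRing.Theory Num.Theory.
Import numFieldNormedType.Exports.
Local Open Scope ring_scope.
Local Open Scope classical_set_scope.

Definition shear_mx (R : comUnitRingType) (r k : nat) (P : 'M[R]_(r, k))
  : 'M[R]_(r + k) := block_mx 1%:M P 0 1%:M.

Definition good_set (R : realType) (r k : nat) (M : 'M[R]_(r + k))
  : set 'M[R]_(r, k) :=
  [set P | drsubmx (invmx (shear_mx P) *m M *m shear_mx P) \in unitmx].

From HB Require Import structures.
From mathcomp Require Import all_boot all_order all_algebra.
From mathcomp Require Import all_classical all_reals all_analysis.
Import Order.TTheory GRing.Theory Num.Theory.
Import numFieldNormedType.Exports.
Local Open Scope ring_scope.
Local Open Scope classical_set_scope.

(* Writing M = [[A, B], [C, D]], the bottom-right block of the conjugate is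
   C P + D, so the set is the nonvanishing locus of P |-> det (C P + D).  It is
   open because this map is continuous.  Along a segment P0 + t (P1 - P0) the
   determinant is a polynomial in t, nonzero as soon as det (C P1 + D) != 0; it
   then has a non-root t arbitrarily close to 0, which gives density.  Such a P1
   exists: if [[A', B'], [C', D']] is the inverse of M then C B' + D D' = 1, so
   P1 = B' (D' + s)^-1 gives C P1 + D = (1 + s D) (D' + s)^-1, invertible for
   all but finitely many s. *)

Lemma invmx_shear (R : comUnitRingType) r k (P : 'M[R]_(r, k)) :
  invmx (shear_mx P) = shear_mx (- P).
Proof.
have shearK : shear_mx P *m shear_mx (- P) = 1%:M.
  rewrite /shear_mx mulmx_block !mulmx0 !mul0mx !mulmx1 !mul1mx !addr0 !add0r.
  by rewrite addNr scalar_mx_block.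
have [shear_unit _] := mulmx1_unit shearK.
by rewrite -[RHS]mul1mx -(mulVmx shear_unit) -mulmxA shearK mulmx1.
Qed.

Lemma drsubmx_shear_conj (R : comUnitRingType) r k (P : 'M[R]_(r, k))
    (M : 'M[R]_(r + k)) :
  drsubmx (invmx (shear_mx P) *m M *m shear_mx P) = dlsubmx M *m P + drsubmx M.
Proof.
rewrite invmx_shear /shear_mx -[M]submxK !mulmx_block block_mxKdr.
by rewrite !mulmx0 !mul0mx !mulmx1 !mul1mx !addr0 !add0r !block_mxKdl !block_mxKdr.
Qed.

Lemma good_setE (R : realType) r k (M : 'M[R]_(r + k)) :
  good_set M = [set P | dlsubmx M *m P + drsubmx M \in unitmx].
Proof. by apply/funext => P; rewrite /good_set /= drsubmx_shear_conj. Qed.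

Lemma exists_small_nonroot {R : numFieldType} {p : {poly R}} {e : R} :
  p != 0 -> 0 < e -> exists2 t, 0 < t < e & ~~ root p t.
Proof.
move=> p_neq0 e_gt0.
pose candidates := [seq e / i.+2%:R | i <- iota 0 (size p)].
have candidates_uniq : uniq candidates.
  rewrite map_inj_uniq ?iota_uniq // => i j.
  by move/(mulfI (lt0r_neq0 e_gt0))/invr_inj/eqP; rewrite eqr_nat => /eqP [].
have : ~~ all (root p) candidates.
  apply/negP => all_roots.
  have := max_poly_roots p_neq0 all_roots candidates_uniq.
  by rewrite size_map size_iota ltnn.
case/allPn => _ /mapP [i _ ->] not_root; exists (e / i.+2%:R) => //.
by rewrite divr_gt0 ?ltr0n //= ltr_pdivrMr ?ltr0n // ltr_pMr // ltr1n.
Qed.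

Section DetPencil.
Context {R : comNzRingType} {n : nat}.
Implicit Types A B : 'M[R]_n.

Definition det_pencil A B : {poly R} :=
  \det (map_mx polyC A + 'X *: map_mx polyC B).

Lemma horner_det_pencil A B t : (det_pencil A B).[t] = \det (A + t *: B).
Proof.
rewrite /det_pencil -horner_evalE -det_map_mx; congr (\det _).
by apply/matrixP => i j; rewrite !mxE /= horner_evalE !hornerE.
Qed.

Lemma det_pencil_neq0 A B t : \det (A + t *: B) != 0 -> det_pencil A B != 0.
Proof. by apply: contraNneq => pencil0; rewrite -horner_det_pencil pencil0 horner0. Qed.

Lemma det_pencil_char_poly A : det_pencil A 1%:M = char_poly (- A).
Proof.
by rewrite /det_pencil /char_poly /char_poly_mx map_mxN opprK addrC map_mx1 scalemx1.
Qed.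

End DetPencil.

Lemma exists_small_unit_pencil {R : numFieldType} {n} (A B : 'M[R]_n) {e : R} :
  A + B \in unitmx -> 0 < e -> exists2 t, 0 < t < e & A + t *: B \in unitmx.
Proof.
rewrite unitmxE unitfE -[B in A + B]scale1r => /det_pencil_neq0 pencil_neq0 e_gt0.
have [t t_small not_root] := exists_small_nonroot pencil_neq0 e_gt0.
by exists t; rewrite // unitmxE unitfE -horner_det_pencil.
Qed.

Lemma exists_affine_unitmx (R : numFieldType) r k (M : 'M[R]_(r + k)) :
  M \in unitmx -> exists P, dlsubmx M *m P + drsubmx M \in unitmx.
Proof.
move=> M_unit; set C := dlsubmx M; set D := drsubmx M.
set B' := ursubmx (invmx M); set D' := drsubmx (invmx M).
have CB'_DD' : C *m B' + D *m D' = 1%:M.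
  have := mulmxV M_unit.
  rewrite -{1}[M]submxK -[invmx M]submxK mulmx_block scalar_mx_block.
  by case/eq_block_mx.
have pencil1D_neq0 : det_pencil 1%:M D != 0.
  by apply: (det_pencil_neq0 _ _ 0); rewrite scale0r addr0 det1 oner_neq0.
have pencilD'1_neq0 : det_pencil D' 1%:M != 0.
  by rewrite det_pencil_char_poly monic_neq0 ?char_poly_monic.
have [s _] := exists_small_nonroot (mulf_neq0 pencil1D_neq0 pencilD'1_neq0) ltr01.
rewrite rootM negb_or !rootE !horner_det_pencil => /andP [det1D det_D's].
set Q := D' + s *: 1%:M.
have Q_unit : Q \in unitmx by rewrite unitmxE unitfE.
exists (B' *m invmx Q).
have -> : C *m (B' *m invmx Q) + D = (1%:M + s *: D) *m invmx Q.
  rewrite -[D in LHS](mulmxK Q_unit) mulmxA -mulmxDl; congr (_ *m _).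
  by rewrite /Q mulmxDr addrA CB'_DD' -scalemxAr mulmx1.
by rewrite unitmx_mul unitmx_inv Q_unit andbT unitmxE unitfE.
Qed.

Lemma continuous_det (K : numFieldType) (T : topologicalType) n
    (f : T -> 'M[K]_n) :
  (forall i j, continuous (fun x => f x i j)) -> continuous (fun x => \det (f x)).
Proof.
move=> f_cont; apply: continuous_big; first exact: add_continuous.
move=> s _ x; apply: cvgMl_tmp; move: x.
by apply: continuous_big => [|i _]; [exact: mul_continuous | exact: f_cont].
Qed.

Section AffineUnitmx.
Variables (R : realFieldType) (r k : nat) (C : 'M[R]_(k, r)) (D : 'M[R]_k).

Lemma open_affine_unitmx : open [set P | C *m P + D \in unitmx].
Proof.
have -> : [set P | C *m P + D \in unitmx] =
          (fun P => \det (C *m P + D)) @^-1` [set x | x != 0].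
  by apply/seteqP; split => P /=; rewrite unitmxE unitfE.
apply: open_comp; last exact: open_neq.
move=> P _; apply: continuous_det => i j.
under eq_fun do rewrite !mxE.
move=> Q; apply: (cvgD (F := nbhs Q)); last exact: cvg_cst.
move: Q; apply: continuous_big => [|l _]; first exact: add_continuous.
by move=> Q; apply: (cvgMl_tmp (F := nbhs Q)); exact: coord_continuous.
Qed.

Lemma dense_affine_unitmx :
  (exists P, C *m P + D \in unitmx) -> dense [set P | C *m P + D \in unitmx].
Proof.
move=> [P1 P1_unit] O [P0 OP0] O_open.
have /nbhs_ballP [e e_gt0 ballO] : nbhs P0 O by exact: open_nbhs_nbhs.
set Q := P1 - P0.
have segmentE t : C *m (P0 + t *: Q) + D = (C *m P0 + D) + t *: (C *m Q).
  by rewrite mulmxDr -scalemxAr addrAC.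
have step_gt0 : 0 < e / (`|Q| + 1) by rewrite divr_gt0 // ltr_wpDl.
have [|t /andP [t_gt0 t_small] unit_t] :=
  exists_small_unit_pencil (C *m P0 + D) (C *m Q) _ step_gt0.
  by rewrite -[C *m Q]scale1r -segmentE scale1r /Q [P0 + _]addrC subrK.
exists (P0 + t *: Q); split; last by rewrite /= segmentE.
apply: ballO; rewrite -ball_normE /ball_ /= opprD addNKr normrN normrZ gtr0_norm //.
rewrite ltr_pdivlMr ?ltr_wpDl // in t_small; apply: le_lt_trans t_small.
by apply: ler_wpM2l; [exact: ltW | rewrite lerDl ler01].
Qed.

End AffineUnitmx.

Theorem lemma5 (R : realType) (r k : nat) (hr : (1 <= r)%N) (hk : (1 <= k)%N)
  (M : 'M[R]_(r + k)) (hM : M \in unitmx) :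
  open (good_set M) /\ dense (good_set M).
Proof.
rewrite good_setE; split; first exact: open_affine_unitmx.
exact/dense_affine_unitmx/exists_affine_unitmx.
Qed.
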